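(* Let $H$ be a connected simple matroid of rank $3$ and let $a,b\in E(H)$ (possibly $a=b$). Then there is a $4$-element circuit of $H$ containing $a$ and $b$, or $H$ is the parallel connection of two lines with base point $a$ or with base point $b$.
   Context: A line is a rank-$2$ flat; the parallel connection is the usual matroid parallel connection along a common base point. *)

From mathcomp Require Import all_boot.
Set Implicit Arguments. Unset Strict Implicit. Unset Printing Implicit Defensive.

Record matroid (E : finType) := Matroid {
  indep : {set E} -> bool;
  indep0 : indep set0;
  indep_subset : forall X Y : {set E}, Y \subset X -> indep X -> indep Y;
  indep_aug : forall X Y : {set E}, indep X -> indep Y -> #|X| < #|Y| ->
      exists2 e, e \in Y :\: X & indep (e |: X)
}.

Section MatroidDefs.
Variables (E : finType) (M : matroid E).

Definition circuit (C : {set E}) : bool :=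
  ~~ indep M C && [forall D : {set E}, (D \proper C) ==> indep M D].

Definition rank (X : {set E}) : nat :=
  \max_(Y in powerset X | indep M Y) #|Y|.

Definition mrank : nat := rank setT.

Definition flat (F : {set E}) : Prop :=
  forall e, e \notin F -> rank F < rank (e |: F).

Definition line (L : {set E}) : Prop := flat L /\ rank L = 2.

(* simple: no loops and no parallel pairs, i.e. all sets of size <= 2
   are independent *)
Definition simple : Prop := forall X : {set E}, #|X| <= 2 -> indep M X.

Definition connected : Prop :=
  forall e f : E, e != f -> exists C, [/\ circuit C, e \in C & f \in C].

(* M is the parallel connection, with base point p, of the two lines
   M|L1 and M|L2 (E = L1 u L2, L1 n L2 = {p}); the circuits of the
   parallel connection P(M1,M2) are (Oxley, Sec. 7.1) the circuits of M1,
   the circuits of M2, and the sets (C1 - p) u (C2 - p) with Ci a circuit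
   of Mi containing p. The circuits of M|L are the circuits of M inside L. *)
Definition parallel_connection_of_lines (p : E) : Prop :=
  exists L1 L2 : {set E},
    [/\ line L1, line L2, L1 :|: L2 = setT, L1 :&: L2 = [set p] &
      forall X : {set E}, circuit X <->
        [\/ circuit X /\ X \subset L1,
            circuit X /\ X \subset L2 |
            exists C1 C2 : {set E},
              [/\ circuit C1 /\ C1 \subset L1 /\ p \in C1,
                  circuit C2 /\ C2 \subset L2 /\ p \in C2 &
                  X = (C1 :\ p) :|: (C2 :\ p)]]].

End MatroidDefs.

From mathcomp Require Import all_boot zify.

(* A set of two points on each of two lines, none on the other line, is a
   4-circuit; a matroid that is the union of two lines meeting in one point c is
   their parallel connection at c.
   For a != b, connectivity gives two points off the line ab.  If two points
   x, y off ab span a line avoiding a and b, then {a, b, x, y} is a 4-circuit.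
   Otherwise each such line xy passes through a or b, and this forces all points
   off ab onto one line through a (or through b), giving a parallel connection.
   When a = b, run the argument with some b' != a; if H is the parallel
   connection at b', a circuit through a and a point of the second line yields a
   further point y of the line ab', and a, y with two points of the second line
   form a 4-circuit. *)
Set Implicit Arguments. Unset Strict Implicit. Unset Printing Implicit Defensive.

Section MatroidBasics.
Variables (E : finType) (M : matroid E).

Lemma card_le_rank (X Y : {set E}) : Y \subset X -> indep M Y -> #|Y| <= rank M X.
Proof.
move=> sYX iY; apply: (leq_bigmax_cond (F := fun Y : {set E} => #|Y|)).
by rewrite powersetE sYX iY.
Qed.

Lemma rank_le (X : {set E}) k :
  (forall Y : {set E}, Y \subset X -> indep M Y -> #|Y| <= k) -> rank M X <= k.
Proof. by move=> h; apply/bigmax_leqP => Y /andP[]; rewrite powersetE; apply: h. Qed.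

Lemma circuit_dep (C : {set E}) : circuit M C -> ~~ indep M C.
Proof. by case/andP. Qed.

Lemma circuit_proper_indep (C D : {set E}) : circuit M C -> D \proper C -> indep M D.
Proof. by case/andP => _ /forallP /(_ D) /implyP. Qed.

Lemma circuitP (C : {set E}) :
  ~~ indep M C -> (forall D : {set E}, D \proper C -> indep M D) -> circuit M C.
Proof. by move=> dC h; rewrite /circuit dC; apply/forallP => D; apply/implyP/h. Qed.

End MatroidBasics.

Section SimpleRank3.
Variables (E : finType) (H : matroid E).
Hypotheses (Hsimple : simple H) (Hrank : mrank H = 3).

Definition line_of (u v : E) : {set E} :=
  [set z | [|| z == u, z == v | ~~ indep H [set u; v; z]]].

Lemma mem_line_ofl u v : u \in line_of u v.
Proof. by rewrite inE eqxx. Qed.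

Lemma mem_line_ofr u v : v \in line_of u v.
Proof. by rewrite inE eqxx orbT. Qed.

Lemma neq_notin_linel u v w : w \notin line_of u v -> w != u.
Proof. by apply: contraNneq => ->; rewrite mem_line_ofl. Qed.

Lemma neq_notin_liner u v w : w \notin line_of u v -> w != v.
Proof. by apply: contraNneq => ->; rewrite mem_line_ofr. Qed.

Lemma line_ofC u v : line_of u v = line_of v u.
Proof.
rewrite /line_of; have -> : [set v; u] = [set u; v] by rewrite setUC.
by apply/setP => z; rewrite !inE orbCA.
Qed.

Lemma indep_notin_line u v z : z \notin line_of u v -> indep H [set u; v; z].
Proof. by rewrite inE !negb_or negbK => /and3P[]. Qed.

Lemma indep_pair u v : indep H [set u; v].
Proof. by apply: Hsimple; rewrite cards2; case: (u != v). Qed.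

Lemma card_indep_le3 (Y : {set E}) : indep H Y -> #|Y| <= 3.
Proof. by rewrite -Hrank; apply: card_le_rank (subsetT Y). Qed.

Lemma card_set3 (x y z : E) : x != y -> x != z -> y != z -> #|[set x; y; z]| = 3.
Proof.
move=> xy xz yz; rewrite setUC cardsU1 cards2 xy !inE.
by rewrite !(eq_sym z) (negbTE xz) (negbTE yz).
Qed.

Lemma set3_sub (S : {set E}) x y z :
  x \in S -> y \in S -> z \in S -> [set x; y; z] \subset S.
Proof. by move=> xS yS zS; apply/subsetP => w; rewrite !inE -orbA => /or3P[]/eqP->. Qed.

Lemma card_indep_line u v (Y : {set E}) :
  u != v -> Y \subset line_of u v -> indep H Y -> #|Y| <= 2.
Proof.
move=> uv sYL iY; rewrite leqNgt; apply/negP => Y_gt2.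
have [|e /setDP[eY euv] ie] := indep_aug (indep_pair u v) iY; first by rewrite cards2 uv.
move: (subsetP sYL e eY); rewrite inE setUC ie orbF.
by move: euv; rewrite !inE => /norP[/negbTE-> /negbTE->].
Qed.

Lemma mem_line_of_pair u v x y z : u != v ->
  x \in line_of u v -> y \in line_of u v -> z \in line_of u v -> y != z ->
  x \in line_of y z.
Proof.
move=> uv xL yL zL yz; rewrite inE.
case: eqP => //= /eqP xy; case: eqP => //= /eqP xz.
apply/negP => iyzx; have := card_indep_line uv (set3_sub yL zL xL) iyzx.
by rewrite card_set3 // eq_sym.
Qed.

Lemma sub_line_of u v p q : u != v ->
  p \in line_of u v -> q \in line_of u v -> p != q -> line_of p q \subset line_of u v.
Proof.
move=> uv pL qL pq; apply/subsetP => w wpq; apply/negPn/negP => wL.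
have [|e /setDP[e_uvw epq] ie] := indep_aug (indep_pair p q) (indep_notin_line wL).
  rewrite cards2 pq card_set3 //; apply: contraNneq wL => <-;
  by rewrite ?mem_line_ofl ?mem_line_ofr.
have : e \in line_of p q.
  case/setUP: e_uvw => [/setUP[]|] /set1P-> //;
  by apply: (mem_line_of_pair uv); rewrite ?mem_line_ofl ?mem_line_ofr.
rewrite inE setUC ie orbF.
by move: epq; rewrite !inE => /norP[/negbTE-> /negbTE->].
Qed.

Lemma line_of_eq u v p q : u != v ->
  p \in line_of u v -> q \in line_of u v -> p != q -> line_of p q = line_of u v.
Proof.
move=> uv pL qL pq; apply/eqP; rewrite eqEsubset sub_line_of //=.
by apply: (sub_line_of pq) => //; apply: (mem_line_of_pair uv);
  rewrite ?mem_line_ofl ?mem_line_ofr.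
Qed.

Lemma line_of_through u v w : u != v ->
  w \in line_of u v -> w != u -> line_of u w = line_of u v.
Proof. by move=> uv wL wu; apply: line_of_eq; rewrite ?mem_line_ofl // eq_sym. Qed.

Lemma dep3_line (D : {set E}) u v w : #|D| = 3 -> ~~ indep H D ->
  u \in D -> v \in D -> w \in D -> u != v -> w \in line_of u v.
Proof.
move=> D3 dD uD vD wD uv; rewrite inE.
case: eqP => //= /eqP wu; case: eqP => //= /eqP wv.
suff -> : [set u; v; w] = D by [].
by apply/eqP; rewrite eqEcard set3_sub // D3 card_set3 // eq_sym.
Qed.

Lemma line_of_line u v : u != v -> line H (line_of u v).
Proof.
move=> uv; have rank2 : rank H (line_of u v) = 2.
  apply/eqP; rewrite eqn_leq (rank_le (fun Y => card_indep_line (Y := Y) uv)) /=.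
  have := card_le_rank (X := line_of u v) _ (indep_pair u v); rewrite cards2 uv.
  by apply; apply/subsetP => w /set2P[]->; rewrite ?mem_line_ofl ?mem_line_ofr.
split=> // e eL; rewrite rank2.
rewrite -(card_set3 uv (z := e)) 1?eq_sym ?(neq_notin_linel eL) ?(neq_notin_liner eL) //.
apply: card_le_rank (indep_notin_line eL).
by rewrite set3_sub ?setU11 // setU1r ?mem_line_ofl ?mem_line_ofr.
Qed.

Lemma exists_neq (a : E) : exists b, a != b.
Proof.
have [b ab | all_eq] := pickP (predC1 a); first by exists b; rewrite eq_sym.
have : rank H setT <= 1.
  apply: rank_le => Y _ _; rewrite -(cards1 a); apply: subset_leq_card.
  by apply/subsetP => z _; rewrite inE; apply/negbFE/all_eq.
by rewrite -/(mrank H) Hrank.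
Qed.

Lemma exists_notin_line (u v : E) : u != v -> exists x, x \notin line_of u v.
Proof.
move=> uv; have [x xL | all_in] := pickP [pred x | x \notin line_of u v].
  by exists x.
have : rank H setT <= 2.
  apply: rank_le => Y _; apply: (card_indep_line uv).
  by apply/subsetP => z _; apply/negbFE/all_in.
by rewrite -/(mrank H) Hrank.
Qed.

Lemma circuit_card_ge3 (C : {set E}) : circuit H C -> 3 <= #|C|.
Proof. by move=> cC; rewrite ltnNge; apply: contraL (circuit_dep cC) => /Hsimple ->. Qed.

Lemma circuit_card_le4 (C : {set E}) : circuit H C -> #|C| <= 4.
Proof.
move=> cC; have /card_gt0P[e eC] : 0 < #|C| by apply: leq_trans (circuit_card_ge3 cC).
by rewrite (cardsD1 e) eC add1n ltnS card_indep_le3 // (circuit_proper_indep cC (properD1 eC)).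
Qed.

Lemma circuit_in_line u v (C : {set E}) :
  u != v -> C \subset line_of u v -> circuit H C = (#|C| == 3).
Proof.
move=> uv sCL; apply/idP/eqP => [cC | C3].
  have /card_gt0P[e eC] : 0 < #|C| by apply: leq_trans (circuit_card_ge3 cC).
  apply/eqP; rewrite eqn_leq circuit_card_ge3 // andbT (cardsD1 e) eC ltnS.
  apply: card_indep_line uv _ (circuit_proper_indep cC (properD1 eC)).
  exact: subset_trans (subsetDl C _) sCL.
apply: circuitP => [|D /proper_card]; last by rewrite C3 => D_lt3; apply: Hsimple.
by apply/negP => /(card_indep_line uv sCL); rewrite C3.
Qed.

Lemma circuit_card4 (C : {set E}) : #|C| = 4 ->
  (forall D : {set E}, D \subset C -> #|D| = 3 -> indep H D) -> circuit H C.
Proof.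
move=> C4 indep3; apply: circuitP => [|D]; first by apply/negP => /card_indep_le3; rewrite C4.
rewrite properEcard C4 ltnS leq_eqVlt => /andP[sDC /orP[/eqP|]]; first exact: indep3.
exact: Hsimple.
Qed.

Lemma indep_across_lines u1 v1 u2 v2 (D : {set E}) p q :
  u1 != v1 -> u2 != v2 -> #|D| = 3 -> D \subset line_of u1 v1 :|: line_of u2 v2 ->
  p \in D -> p \notin line_of u2 v2 -> q \in D -> q \notin line_of u1 v1 -> indep H D.
Proof.
move=> uv1 uv2 D3 sDL pD pL2 qD qL1; apply/idPn => dD.
have pL1 : p \in line_of u1 v1 by move: (subsetP sDL p pD); rewrite inE (negbTE pL2) orbF.
have qL2 : q \in line_of u2 v2 by move: (subsetP sDL q qD); rewrite inE (negbTE qL1).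
have pq : p != q by apply: contraNneq qL1 => <-.
have /subsetPn[r rD] : ~~ (D \subset [set p; q]).
  by apply/negP => /subset_leq_card; rewrite D3 cards2 pq.
rewrite !inE ![r == _]eq_sym => /norP[rp rq].
case/setUP: (subsetP sDL r rD) => rL.
- have := dep3_line D3 dD pD rD qD rp.
  by rewrite (line_of_eq uv1 pL1 rL rp) (negbTE qL1).
- have := dep3_line D3 dD qD rD pD rq.
  by rewrite (line_of_eq uv2 qL2 rL rq) (negbTE pL2).
Qed.

Lemma exists_other_notin_line u v z (C : {set E}) :
  u != v -> z \notin line_of u v -> circuit H C -> z \in C ->
  exists2 y, y \in C & (y != z) && (y \notin line_of u v).
Proof.
move=> uv zL cC zC.
have [y /and3P[yC yz yL] | none] :=
  pickP [pred y | [&& y \in C, y != z & y \notin line_of u v]].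
  by exists y; rewrite ?yz.
have sCL : C :\ z \subset line_of u v.
  by apply/subsetP => y /setD1P[yz yC]; move: (none y); rewrite /= yC yz => /negbFE.
have := card_indep_line uv sCL (circuit_proper_indep cC (properD1 zC)).
have := circuit_card_ge3 cC; rewrite (cardsD1 z) zC add1n ltnS => ge2 le2.
have /cards2P[p [q [pq Cz]]] : #|C :\ z| == 2 by rewrite eqn_leq le2 ge2.
have C3 : #|C| = 3 by rewrite (cardsD1 z) zC Cz cards2 pq.
have pCz : p \in C :\ z by rewrite Cz set21.
have qCz : q \in C :\ z by rewrite Cz set22.
have := dep3_line C3 (circuit_dep cC) (setD1P pCz).2 (setD1P qCz).2 zC pq.
by rewrite (line_of_eq uv (subsetP sCL p pCz) (subsetP sCL q qCz) pq) (negbTE zL).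
Qed.

Lemma two_points_off_line u v : connected H -> u != v ->
  exists x y, [/\ x \notin line_of u v, y \notin line_of u v & x != y].
Proof.
move=> Hconn uv; have [x xL] := exists_notin_line uv.
have [|C [cC uC xC]] := Hconn u x; first by rewrite eq_sym (neq_notin_linel xL).
have [y yC /andP[yx yL]] := exists_other_notin_line uv xL cC xC.
by exists x, y; rewrite eq_sym.
Qed.

Lemma circuit4_of_two_lines u1 v1 u2 v2 (A B : {set E}) : u1 != v1 -> u2 != v2 ->
  A \subset line_of u1 v1 :\: line_of u2 v2 -> B \subset line_of u2 v2 :\: line_of u1 v1 ->
  #|A| = 2 -> #|B| = 2 -> circuit H (A :|: B) /\ #|A :|: B| = 4.
Proof.
move=> uv1 uv2 sA sB A2 B2.
have AB0 : A :&: B = set0.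
  apply/eqP; rewrite -subset0; apply/subsetP => x /setIP[xA xB].
  have /setDP[xL1 _] := subsetP sA x xA.
  by have /setDP[_ /negP] := subsetP sB x xB.
have AB4 : #|A :|: B| = 4 by rewrite cardsU AB0 A2 B2 cards0.
split=> //; apply: circuit_card4 => // D sD D3.
have sDL : D \subset line_of u1 v1 :|: line_of u2 v2.
  by apply: subset_trans sD (setUSS (subset_trans sA _) (subset_trans sB _)); apply: subsetDl.
have notin_pair (S : {set E}) : #|S| = 2 -> ~~ (D \subset S).
  by move=> S2; apply/negP => /subset_leq_card; rewrite D3 S2.
have [p pD pB] := subsetPn (notin_pair B B2).
have [q qD qA] := subsetPn (notin_pair A A2).
have /setUP[pA|] := subsetP sD p pD; last by rewrite (negbTE pB).
have /setUP[|qB] := subsetP sD q qD; first by rewrite (negbTE qA).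
apply: (indep_across_lines uv1 uv2 D3 sDL pD _ qD).
  by have /setDP[] := subsetP sA p pA.
by have /setDP[] := subsetP sB q qB.
Qed.

Section TwoLines.
Variables u1 v1 u2 v2 c : E.
Hypotheses (uv1 : u1 != v1) (uv2 : u2 != v2).
Local Notation L1 := (line_of u1 v1).
Local Notation L2 := (line_of u2 v2).
Hypotheses (lines_cover : L1 :|: L2 = setT) (lines_meet : L1 :&: L2 = [set c]).

Lemma circuit_across_split (X : {set E}) :
  circuit H X -> ~~ (X \subset L1) -> ~~ (X \subset L2) ->
  exists C1 C2 : {set E},
    [/\ circuit H C1 /\ C1 \subset L1 /\ c \in C1,
        circuit H C2 /\ C2 \subset L2 /\ c \in C2 & X = (C1 :\ c) :|: (C2 :\ c)].
Proof.
move=> cX nX1 nX2.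
have sXL : X \subset L1 :|: L2 by rewrite lines_cover subsetT.
have X4 : #|X| = 4.
  have [q qX qL1] := subsetPn nX1; have [p pX pL2] := subsetPn nX2.
  have : #|X| != 3.
    apply: contraNneq (circuit_dep cX) => X3.
    exact: indep_across_lines uv1 uv2 X3 sXL pX pL2 qX qL1.
  by have := circuit_card_ge3 cX; have := circuit_card_le4 cX; lia.
have := card_indep_line uv1 (subsetIr X L1) (circuit_proper_indep cX (properIl nX1)).
have := card_indep_line uv2 (subsetIr X L2) (circuit_proper_indep cX (properIl nX2)).
(* Inclusion-exclusion against #|X :&: Li| <= 2 forces c \notin X and #|X :&: Li| = 2. *)
have := cardsUI (X :&: L1) (X :&: L2).
rewrite -setIUr lines_cover setIT setIACA setIid lines_meet X4 => count Y2_le2 Y1_le2.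
have /cards0_eq/setP/(_ c) : #|X :&: [set c]| = 0 by lia.
rewrite !inE eqxx andbT => cX'.
have /setIP[cL1 cL2] : c \in L1 :&: L2 by rewrite lines_meet set11.
have circuit_of_half u v : u != v -> c \in line_of u v -> #|X :&: line_of u v| = 2 ->
    circuit H (c |: (X :&: line_of u v)) /\
    c |: (X :&: line_of u v) \subset line_of u v /\ c \in c |: (X :&: line_of u v).
  move=> uv cL Y2; have sCL : c |: (X :&: line_of u v) \subset line_of u v.
    by rewrite subUset sub1set cL subsetIr.
  by rewrite (circuit_in_line uv sCL) cardsU1 inE cX' Y2 setU11.
exists (c |: (X :&: L1)), (c |: (X :&: L2)); split; try (apply: circuit_of_half => //; lia).
by rewrite !setU1K ?inE ?cX' // -setIUr lines_cover setIT.
Qed.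

Lemma circuit_across_glue (C1 C2 : {set E}) :
  circuit H C1 /\ C1 \subset L1 /\ c \in C1 -> circuit H C2 /\ C2 \subset L2 /\ c \in C2 ->
  circuit H ((C1 :\ c) :|: (C2 :\ c)).
Proof.
have half_of_circuit u v u' v' (C : {set E}) : u != v -> line_of u v :&: line_of u' v' = [set c] ->
    circuit H C /\ C \subset line_of u v /\ c \in C ->
    C :\ c \subset line_of u v :\: line_of u' v' /\ #|C :\ c| = 2.
  move=> uv meet [cC [sCL cC']]; split.
    apply/subsetP => z /setD1P[zc zC]; rewrite inE (subsetP sCL z zC) andbT.
    by apply: contra zc => zL'; rewrite -in_set1 -meet inE zL' (subsetP sCL z zC).
  by move: cC; rewrite (circuit_in_line uv sCL) (cardsD1 c) cC' add1n eqSS => /eqP.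
move=> h1 h2; have [sA A2] := half_of_circuit _ _ _ _ _ uv1 lines_meet h1.
have [sB B2] := half_of_circuit _ _ _ _ _ uv2 (etrans (setIC _ _) lines_meet) h2.
exact: (circuit4_of_two_lines uv1 uv2 sA sB A2 B2).1.
Qed.

Lemma parallel_connection_of_two_lines : parallel_connection_of_lines H c.
Proof.
exists L1, L2; split=> //; try exact: line_of_line.
move=> X; split=> [cX | [[]|[]|[C1 [C2 [h1 h2 ->]]]]] //; last exact: circuit_across_glue.
have [sX1|nX1] := boolP (X \subset L1); first by constructor 1.
have [sX2|nX2] := boolP (X \subset L2); first by constructor 2.
by constructor 3; apply: circuit_across_split.
Qed.

End TwoLines.

Lemma quad_circuit a b x y : a != b -> x != y ->
  x \notin line_of a b -> y \notin line_of a b -> a \notin line_of x y -> b \notin line_of x y ->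
  circuit H ([set a; b] :|: [set x; y]) /\ #|[set a; b] :|: [set x; y]| = 4.
Proof.
move=> ab xy xL yL aL bL; apply: (circuit4_of_two_lines ab xy); rewrite ?cards2 ?ab ?xy //;
by apply/subsetP => w /set2P[]->; apply/setDP; rewrite ?mem_line_ofl ?mem_line_ofr.
Qed.

Definition two_lines_cover (c d x : E) : Prop :=
  x \notin line_of c d /\ forall z, z \notin line_of c d -> z \in line_of c x.

Lemma parallel_connection_of_cover c d x :
  c != d -> two_lines_cover c d x -> parallel_connection_of_lines H c.
Proof.
move=> cd [xL cover]; have cx : c != x by rewrite eq_sym (neq_notin_linel xL).
apply: (parallel_connection_of_two_lines cd cx).
  apply/eqP; rewrite eqEsubset subsetT; apply/subsetP => z _; apply/setUP.
  by case: (boolP (z \in line_of c d)) => [|/cover]; [left | right].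
apply/setP => z; apply/setIP/set1P => [[zL1 zL2] | ->]; last by rewrite !mem_line_ofl.
apply: contraTeq xL => zc; rewrite negbK.
by rewrite -(line_of_through cd zL1 zc) (line_of_through cx zL2 zc) mem_line_ofr.
Qed.

Lemma cover_of_no_quad c d x0 y0 : c != d ->
  x0 \notin line_of c d -> y0 \notin line_of c d -> x0 != y0 -> c \in line_of x0 y0 ->
  (forall x y, x \notin line_of c d -> y \notin line_of c d -> x != y ->
     (c \in line_of x y) || (d \in line_of x y)) ->
  two_lines_cover c d x0.
Proof.
move=> cd x0L y0L xy cL no_quad; split=> // z zL; apply/negPn/negP => zM.
have cx0 : c != x0 by rewrite eq_sym (neq_notin_linel x0L).
have dz : d != z by rewrite eq_sym (neq_notin_liner zL).
have y0M : y0 \in line_of c x0.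
  by rewrite line_ofC (line_of_through xy cL) ?mem_line_ofr // eq_sym.
have on_zd w : w \in line_of c x0 -> w \notin line_of c d -> w \in line_of d z.
  move=> wM wL; have wc := neq_notin_linel wL.
  have wz : w != z by apply: contraNneq zM => <-.
  have/orP[cwz|dwz] := no_quad w z wL zL wz.
    move: zM; rewrite -(line_of_through cx0 wM wc) line_ofC.
    by rewrite (line_of_through wz cwz) ?mem_line_ofr // eq_sym.
  have zw : z != w by rewrite eq_sym.
  by rewrite line_ofC (line_of_through zw _ dz) ?mem_line_ofr // line_ofC.
have x0_dz := on_zd x0 (mem_line_ofr c x0) x0L.
have y0_dz := on_zd y0 y0M y0L.
have c_dz : c \in line_of d z by rewrite -(line_of_eq dz x0_dz y0_dz xy).
by move: zL; rewrite line_ofC (line_of_through dz c_dz cd) mem_line_ofr.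
Qed.

Lemma quad_or_cover a b : connected H -> a != b ->
  [\/ exists C, [/\ circuit H C, #|C| = 4, a \in C & b \in C],
      exists x, two_lines_cover a b x
    | exists x, two_lines_cover b a x].
Proof.
move=> Hconn ab; have [x0 [y0 [x0L y0L xy]]] := two_points_off_line Hconn ab.
have [[x y] /and5P[/= xL yL xy' aL bL] | no_quad] := pickP [pred p : E * E |
    [&& p.1 \notin line_of a b, p.2 \notin line_of a b, p.1 != p.2,
        a \notin line_of p.1 p.2 & b \notin line_of p.1 p.2]].
  have [cQ Q4] := quad_circuit ab xy' xL yL aL bL.
  by constructor 1; exists ([set a; b] :|: [set x; y]); rewrite cQ Q4 !inE !eqxx ?orbT.
have {}no_quad x y : x \notin line_of a b -> y \notin line_of a b -> x != y ->
    (a \in line_of x y) || (b \in line_of x y).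
  by move=> xL yL xy'; move/negbT: (no_quad (x, y)); rewrite /= xL yL xy' /= negb_and !negbK.
have [aM | aM] := boolP (a \in line_of x0 y0).
  by constructor 2; exists x0; apply: (cover_of_no_quad ab x0L y0L xy aM no_quad).
have bM : b \in line_of x0 y0 by have := no_quad x0 y0 x0L y0L xy; rewrite (negbTE aM).
constructor 3; exists x0; rewrite line_ofC in x0L y0L.
apply: (cover_of_no_quad _ x0L y0L xy bM); first by rewrite eq_sym.
by move=> x y; rewrite line_ofC orbC; apply: no_quad.
Qed.

Lemma quad_circuit_of_cover c a x : connected H -> c != a -> two_lines_cover c a x ->
  exists C, [/\ circuit H C, #|C| = 4 & a \in C].
Proof.
move=> Hconn ca [xL cover].
have [x0 [y0 [x0L y0L xy]]] := two_points_off_line Hconn ca.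
have cx : c != x by rewrite eq_sym (neq_notin_linel xL).
have aM : a \notin line_of c x.
  apply: contra xL => aM; rewrite (line_of_through cx aM) ?mem_line_ofr //.
  by rewrite eq_sym.
have [|C [cC aC x0C]] := Hconn a x0; first by rewrite eq_sym (neq_notin_liner x0L).
have [y yC /andP[ya yM]] := exists_other_notin_line cx aM cC aC.
have yL : y \in line_of c a := contraR (@cover y) yM.
have ay : a != y by rewrite eq_sym.
have Lay : line_of a y = line_of c a := line_of_eq ca (mem_line_ofr c a) yL ay.
have Lxy : line_of x0 y0 = line_of c x := line_of_eq cx (cover x0 x0L) (cover y0 y0L) xy.
have [cQ Q4] : circuit H ([set a; y] :|: [set x0; y0]) /\
               #|[set a; y] :|: [set x0; y0]| = 4.
  by apply: quad_circuit; rewrite ?Lay ?Lxy.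
by exists ([set a; y] :|: [set x0; y0]); rewrite cQ Q4 !inE eqxx.
Qed.

End SimpleRank3.

Theorem lemma3p1 (E : finType) (H : matroid E) (a b : E) :
  connected H -> simple H -> mrank H = 3 ->
  (exists C : {set E}, [/\ circuit H C, #|C| = 4, a \in C & b \in C]) \/
  parallel_connection_of_lines H a \/ parallel_connection_of_lines H b.
Proof.
move=> Hconn Hsimple Hrank.
have [ab | /negPn/eqP <-{b}] := boolP (a != b).
  have ba : b != a by rewrite eq_sym.
  case: (quad_or_cover Hsimple Hrank Hconn ab) => [quad | [x] | [x]]; first by left.
  - by move/(parallel_connection_of_cover Hsimple Hrank ab); right; left.
  - by move/(parallel_connection_of_cover Hsimple Hrank ba); right; right.
have [b ab] := exists_neq Hrank a; have ba : b != a by rewrite eq_sym.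
case: (quad_or_cover Hsimple Hrank Hconn ab) => [[C [cC C4 aC _]] | [x] | [x]].
- by left; exists C.
- by move/(parallel_connection_of_cover Hsimple Hrank ab); right; left.
- case/(quad_circuit_of_cover Hsimple Hrank Hconn ba) => C [cC C4 aC].
  by left; exists C.
Qed.
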